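(* Let $m\ge2$, $n\ge1$, $f_i:\mathbb{R}^n\to\mathbb{R}$ smooth, $F(\boldsymbol\theta)=\sum_{i=1}^mf_i(\boldsymbol\theta_i)$, $\mathbf{r}\in\mathbb{R}^n$. Let $\alpha>0$, let $\boldsymbol\theta^0\in\mathbb{R}^{mn}$ satisfy $(\mathbf{1}_m^\top\otimes\mathbf{I}_n)\boldsymbol\theta^0=\mathbf{r}$, let $\{\mathbf{n}^k\}\subset\mathbb{R}^{mn}$ be any noise sequence, and let $\Psi_{\boldsymbol\theta^0}(\mathbf{x})=F(\boldsymbol\theta^0+\sqrt{\hat{\mathbf{L}}}\mathbf{x})$. Then the sequence generated by $\boldsymbol\theta^{k+1}=\boldsymbol\theta^k-\alpha(\hat{\mathbf{L}}\nabla F(\boldsymbol\theta^k)+\sqrt{\hat{\mathbf{L}}}\mathbf{n}^k)$ from $\boldsymbol\theta^0$ coincides with the sequence generated by $$\mathbf{x}^{k+1}=\mathbf{x}^k-\alpha(\nabla\Psi_{\boldsymbol\theta^0}(\mathbf{x}^k)+\mathbf{n}^k),\qquad\boldsymbol\theta^{k+1}=\boldsymbol\theta^0+\sqrt{\hat{\mathbf{L}}}\mathbf{x}^{k+1},$$ from $\mathbf{x}^0=\mathbf{0}$ and the same $\boldsymbol\theta^0$, with the same perturbations $\{\mathbf{n}^k\}$ and step-size $\alpha$.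
   Context: $\boldsymbol\theta=[\boldsymbol\theta_1^\top,\dots,\boldsymbol\theta_m^\top]^\top\in\mathbb{R}^{mn}$, $\nabla F$ the stacked gradient. $\mathbf{L}$ is the Laplacian of an undirected graph on $\{1,\dots,m\}$; $\sqrt{\mathbf{L}}$ its unique symmetric positive semidefinite square root; $\hat{\mathbf{L}}=\mathbf{L}\otimes\mathbf{I}_n$, $\sqrt{\hat{\mathbf{L}}}=\sqrt{\mathbf{L}}\otimes\mathbf{I}_n$. *)

From HB Require Import structures.
From mathcomp Require Import all_boot all_order all_algebra.
From mathcomp Require Import all_classical all_reals all_analysis.
Set Implicit Arguments. Unset Strict Implicit. Unset Printing Implicit Defensive.
Import Order.TTheory GRing.Theory Num.Theory.
Import numFieldNormedType.Exports.
Local Open Scope ring_scope.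

(* Conventions: a stacked vector theta = [theta_1^T, ..., theta_m^T]^T in
   R^{mn} is represented by the m x n matrix whose i-th row is theta_i^T.
   Under this identification (A \otimes I_n) theta corresponds to A *m Theta,
   and (1_m^T \otimes I_n) theta corresponds to \sum_i row i Theta. *)

Definition laplacian (m : nat) (R : ringType) (e : rel 'I_m) : 'M[R]_m :=
  \matrix_(i, j) (if i == j then (#|[set k | e i k]|)%:R
                  else - ((e i j : nat)%:R)).

Definition undirected_graph (m : nat) (e : rel 'I_m) : Prop :=
  symmetric e /\ irreflexive e.

Definition is_sqrt_psd (R : realType) (m : nat) (L S : 'M[R]_m) : Prop :=
  [/\ S^T = S,
      (forall v : 'cV[R]_m, 0 <= (v^T *m S *m v) 0 0)
    & S *m S = L].

Fixpoint Ck (R : realType) (V : normedModType R) (k : nat) (f : V -> R) : Prop :=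
  match k with
  | 0 => continuous f
  | k'.+1 => (forall x, differentiable f x) /\ (forall v : V, Ck k' ('D_v f))
  end.

Definition smooth (R : realType) (V : normedModType R) (f : V -> R) : Prop :=
  forall k, Ck k f.

Definition gradM (R : realType) (m n : nat) (g : 'M[R]_(m, n) -> R)
  (x : 'M[R]_(m, n)) : 'M[R]_(m, n) :=
  \matrix_(i, j) 'D_(delta_mx i j) g x.

Definition Fsum (R : realType) (m n : nat) (f : 'I_m -> 'rV[R]_n -> R)
  (theta : 'M[R]_(m, n)) : R :=
  \sum_(i < m) f i (row i theta).

From HB Require Import structures.
From mathcomp Require Import all_boot all_order all_algebra.
From mathcomp Require Import all_classical all_reals all_analysis.
Import Order.TTheory GRing.Theory Num.Theory.
Import numFieldNormedType.Exports.
Local Open Scope ring_scope.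

(* The substitution theta = theta0 + S x with S^2 = L turns the Laplacian
   iteration into gradient descent in x: by the chain rule the gradient of
   Psi(x) = F(theta0 + S x) is S^T grad F(theta0 + S x) = S grad F(theta),
   so S applied to one step of the x-recursion is exactly one step of the
   theta-recursion. *)

Lemma smooth_differentiable (R : realType) (V : normedModType R) (f : V -> R)
  (x : V) : smooth f -> differentiable f x.
Proof. by move=> /(_ 1%N) [+ _]; apply. Qed.

Lemma mulmx_delta_mx (R : pzSemiRingType) (m n : nat) (S : 'M[R]_m)
  (i : 'I_m) (j : 'I_n) :
  S *m delta_mx i j = \sum_(a < m) S a i *: delta_mx a j.
Proof.
apply/matrixP => p q; rewrite mxE summxE (bigD1 i) //= big1; last first.
  by move=> k /negbTE ki; rewrite !mxE ki mulr0.
rewrite (bigD1 p) //= big1; last first.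
  by move=> k /negbTE kp; rewrite !mxE eq_sym kp mulr0.
by rewrite !mxE !eqxx !addr0.
Qed.

Section MatrixCalculus.
Variable R : numFieldType.

Lemma continuous_row (m n : nat) (i : 'I_m) :
  continuous (row i : 'M[R]_(m, n) -> 'rV[R]_n).
Proof.
move=> u A /nbhs_ballP[e /= e0 eA].
apply/nbhs_ballP; exists e => //= v [_ uv]; apply: eA; split => // p j.
by apply: (le_lt_trans _ (uv i j)); rewrite !mxE.
Qed.

Lemma differentiable_row (m n : nat) (i : 'I_m) (x : 'M[R]_(m, n)) :
  differentiable (row i) x.
Proof. exact/linear_differentiable/continuous_row. Qed.

Lemma derive_comp_affine (m n : nat) (g : 'M[R]_(m, n) -> R)
  (theta0 : 'M[R]_(m, n)) (S : 'M[R]_m) (y v : 'M[R]_(m, n)) :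
  'D_v (fun z => g (theta0 + S *m z)) y = 'D_(S *m v) g (theta0 + S *m y).
Proof.
rewrite /derive; do 2 f_equal; apply: funext => h /=.
by rewrite mulmxDr -scalemxAr addrCA.
Qed.

End MatrixCalculus.

Lemma differentiable_Fsum (R : realType) (m n : nat)
  (f : 'I_m -> 'rV[R]_n -> R) (x : 'M[R]_(m, n)) :
  (forall i y, differentiable (f i) y) -> differentiable (Fsum f) x.
Proof.
move=> df.
have -> : Fsum f = \sum_(i < m) (fun t => f i (row i t)).
  by apply: funext => t; rewrite /Fsum fct_sumE.
apply: differentiable_sum => i.
apply: (@differentiable_comp _ _ _ _ (row i) (f i)).
- exact: differentiable_row.
- exact: df.
Qed.

Lemma gradM_comp_affine (R : realType) (m n : nat) (g : 'M[R]_(m, n) -> R)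
  (theta0 : 'M[R]_(m, n)) (S : 'M[R]_m) (y : 'M[R]_(m, n)) :
  differentiable g (theta0 + S *m y) ->
  gradM (fun z => g (theta0 + S *m z)) y = S^T *m gradM g (theta0 + S *m y).
Proof.
move=> dg; apply/matrixP => i j.
rewrite !mxE derive_comp_affine deriveE // mulmx_delta_mx linear_sum.
apply: eq_bigr => a _; rewrite linearZ /= -deriveE //.
by rewrite !mxE.
Qed.

Lemma preconditioned_iteration_eq_affine_descent
  {R : comPzRingType} {m n : nat} {L S : 'M[R]_m} (G : 'M[R]_(m, n) -> 'M[R]_(m, n)) {alpha : R}
  {theta0 : 'M[R]_(m, n)} {noise theta x : nat -> 'M[R]_(m, n)} :
  S *m S = L ->
  theta 0%N = theta0 ->
  (forall k, theta k.+1 = theta k - alpha *: (L *m G (theta k) + S *m noise k)) ->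
  x 0%N = 0 ->
  (forall k, x k.+1 = x k - alpha *: (S *m G (theta0 + S *m x k) + noise k)) ->
  forall k, theta k = theta0 + S *m x k.
Proof.
move=> SS th0 thS x0 xS; elim=> [|k IH]; first by rewrite th0 x0 mulmx0 addr0.
rewrite thS xS IH -SS -mulmxA -mulmxDr.
by rewrite mulmxBr scalemxAr addrA.
Qed.

Theorem proposition4 (R : realType) (m n : nat) (e : rel 'I_m)
  (S : 'M[R]_m) (f : 'I_m -> 'rV[R]_n -> R) (r : 'rV[R]_n)
  (alpha : R) (theta0 : 'M[R]_(m, n)) (noise : nat -> 'M[R]_(m, n))
  (theta x : nat -> 'M[R]_(m, n)) :
  (2 <= m)%N -> (1 <= n)%N ->
  undirected_graph e ->
  is_sqrt_psd (laplacian R e) S ->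
  (forall i, smooth (f i)) ->
  0 < alpha ->
  \sum_(i < m) row i theta0 = r ->
  (* the perturbed Laplacian-gradient iteration *)
  theta 0%N = theta0 ->
  (forall k, theta k.+1 = theta k - alpha *: (laplacian R e *m gradM (Fsum f) (theta k)
                                             + S *m noise k)) ->
  (* the perturbed gradient descent on Psi *)
  let Psi := fun y : 'M[R]_(m, n) => Fsum f (theta0 + S *m y) in
  x 0%N = 0 ->
  (forall k, x k.+1 = x k - alpha *: (gradM Psi (x k) + noise k)) ->
  forall k, theta k = theta0 + S *m x k.
Proof.
move=> _ _ _ [ST _ SS] smooth_f _ _ th0 thS Psi x0 xS.
have dF y : differentiable (Fsum f) y.
  by apply: differentiable_Fsum => i z; apply: smooth_differentiable.
apply: (preconditioned_iteration_eq_affine_descent (gradM (Fsum f)) SS th0 thS x0) => k.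
by rewrite xS /Psi (gradM_comp_affine _ _ _ (Fsum f)) // ST.
Qed.
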